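(* Let $\lambda_1>\lambda_2>\lambda_3>0$, $D=\mathrm{diag}(\lambda_1,\lambda_2,\lambda_3)$, and $G=\widetilde W_{1,0}(\cdot;D)\circ\mathbf P:S^3\to\mathbb R$. For $s>2$ write $a(s)=\sqrt{\tfrac12+\tfrac1s}$, $b(s)=\sqrt{\tfrac12-\tfrac1s}$. The critical points of $G$ are exactly the following (all sign combinations independent): 1. $(\pm1,0,0,0)$, with value $(\lambda_1-1)^2+(\lambda_2-1)^2+(\lambda_3-1)^2$; 2. $(0,\pm1,0,0)$, value $(\lambda_1-1)^2+(\lambda_2+1)^2+(\lambda_3+1)^2$; 3. $(0,0,\pm1,0)$, value $(\lambda_1+1)^2+(\lambda_2-1)^2+(\lambda_3+1)^2$; 4. $(0,0,0,\pm1)$, value $(\lambda_1+1)^2+(\lambda_2+1)^2+(\lambda_3-1)^2$; 5. if $s=\lambda_2-\lambda_3>2$: $(0,0,\pm a(s),\pm b(s))$, value $(\lambda_1+1)^2+\frac12(\lambda_2+\lambda_3)^2$; 6. if $s=\lambda_1-\lambda_3>2$: $(0,\pm a(s),0,\pm b(s))$, value $(\lambda_2+1)^2+\frac12(\lambda_1+\lambda_3)^2$; 7. if $s=\lambda_1-\lambda_2>2$: $(0,\pm a(s),\pm b(s),0)$, value $(\lambda_3+1)^2+\frac12(\lambda_1+\lambda_2)^2$; 8. if $s=\lambda_1+\lambda_2>2$: $(\pm a(s),0,0,\pm b(s))$, value $(\lambda_3-1)^2+\frac12(\lambda_1-\lambda_2)^2$; 9. if $s=\lambda_1+\lambda_3>2$: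 $(\pm a(s),0,\pm b(s),0)$, value $(\lambda_2-1)^2+\frac12(\lambda_1-\lambda_3)^2$; 10. if $s=\lambda_2+\lambda_3>2$: $(\pm a(s),\pm b(s),0,0)$, value $(\lambda_1-1)^2+\frac12(\lambda_2-\lambda_3)^2$.
   Context: $\mathrm{sym}(Y)=\tfrac12(Y+Y^T)$, $\|Y\|^2=\mathrm{tr}(Y^TY)$. For invertible $G$, $\widetilde W_{1,0}(R;G)=\|\mathrm{sym}(R^TG-\mathbb I_3)\|^2$, $R\in SO(3)$. $S^3=\{q=(q^0,q^1,q^2,q^3)\in\mathbb R^4:\|q\|=1\}$ and $\mathbf P:S^3\to SO(3)$ is the double covering $$\mathbf P(q)=\begin{pmatrix}(q^0)^2+(q^1)^2-(q^2)^2-(q^3)^2 & 2(q^1q^2-q^0q^3) & 2(q^1q^3+q^0q^2)\\ 2(q^1q^2+q^0q^3) & (q^0)^2-(q^1)^2+(q^2)^2-(q^3)^2 & 2(q^2q^3-q^0q^1)\\ 2(q^1q^3-q^0q^2) & 2(q^2q^3+q^0q^1) & (q^0)^2-(q^1)^2-(q^2)^2+(q^3)^2\end{pmatrix},$$ with $\mathbf P(q)=\mathbf P(-q)$. Critical points of $G$ are points where the differential of $G$ on the manifold $S^3$ vanishes. *)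

From Stdlib Require Import Reals Lra.
Open Scope R_scope.

(* 3x3 real matrices, indexed by 0,1,2 (entries at other indices are never used). *)
Definition mat3 := nat -> nat -> R.
Definition sum3 (f : nat -> R) : R := f 0%nat + f 1%nat + f 2%nat.
Definition mtr (A : mat3) : mat3 := fun i j => A j i.
Definition mmul (A B : mat3) : mat3 := fun i j => sum3 (fun k => A i k * B k j).
Definition id3 : mat3 := fun i j => if Nat.eqb i j then 1 else 0.
Definition msub (A B : mat3) : mat3 := fun i j => A i j - B i j.
Definition msym (A : mat3) : mat3 := fun i j => / 2 * (A i j + A j i).
Definition mtrace (A : mat3) : R := sum3 (fun i => A i i).
Definition fnorm2 (Y : mat3) : R := mtrace (mmul (mtr Y) Y).

Definition W10 (Rm Gm : mat3) : R := fnorm2 (msym (msub (mmul (mtr Rm) Gm) id3)).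

Definition diag3 (l1 l2 l3 : R) : mat3 :=
  fun i j => if Nat.eqb i j then
               match i with 0%nat => l1 | 1%nat => l2 | _ => l3 end
             else 0.

(* The double covering P : S^3 -> SO(3), written as a polynomial map on R^4. *)
Definition Pq (q0 q1 q2 q3 : R) : mat3 := fun i j =>
  match i, j with
  | 0%nat, 0%nat => q0^2 + q1^2 - q2^2 - q3^2
  | 0%nat, 1%nat => 2 * (q1*q2 - q0*q3)
  | 0%nat, _     => 2 * (q1*q3 + q0*q2)
  | 1%nat, 0%nat => 2 * (q1*q2 + q0*q3)
  | 1%nat, 1%nat => q0^2 - q1^2 + q2^2 - q3^2
  | 1%nat, _     => 2 * (q2*q3 - q0*q1)
  | _, 0%nat     => 2 * (q1*q3 - q0*q2)
  | _, 1%nat     => 2 * (q2*q3 + q0*q1)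
  | _, _         => q0^2 - q1^2 - q2^2 + q3^2
  end.

(* G = W~_{1,0}(. ; D) o P, with D = diag(l1,l2,l3); given by the same
   polynomial formula on all of R^4 (its restriction to S^3 is the paper's G). *)
Definition Gfun (l1 l2 l3 q0 q1 q2 q3 : R) : R :=
  W10 (Pq q0 q1 q2 q3) (diag3 l1 l2 l3).

Definition on_S3 (q0 q1 q2 q3 : R) : Prop := q0^2 + q1^2 + q2^2 + q3^2 = 1.

Definition critical_S3 (l1 l2 l3 q0 q1 q2 q3 : R) : Prop :=
  forall v0 v1 v2 v3 : R,
    q0*v0 + q1*v1 + q2*v2 + q3*v3 = 0 ->
    derivable_pt_lim
      (fun t => Gfun l1 l2 l3 (q0 + t*v0) (q1 + t*v1) (q2 + t*v2) (q3 + t*v3)) 0 0.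

Definition a_s (s : R) : R := sqrt (/2 + /s).
Definition b_s (s : R) : R := sqrt (/2 - /s).

Definition pm (x y : R) : Prop := x = y \/ x = - y.

(* Strategy.
   1. G is a polynomial in the squares W = q0^2, ..., Z = q3^2 ([Gfun_Fsq]), so
      its gradient is (2 q_i g_i)_i for explicit polynomials g_i, and q is
      critical iff sum_i q_i v_i g_i = 0 for every v tangent to S^3.
   2. A general Lagrange-multiplier fact ([tangent_condition_iff_balanced]):
      for q on S^3 this holds iff q_i q_j (g_i - g_j) = 0 for all i < j.
   3. On S^3 each difference factors as g_i - g_j = 2 c_ij (tr(D P(q)) - t_ij)
      with c_ij in {l_k +- l_m} nonzero and six thresholds t_ij = 2 +- l_k
      ([g_differences]); so q is critical iff for every pair i < j,
      q_i = 0 or q_j = 0 or tr(D P(q)) = t_ij ([critical_iff_pair_conditions]).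
   4. For l1 > l2 > l3 > 0 the six thresholds are pairwise distinct, so at most
      two coordinates of a critical point are nonzero.  One nonzero coordinate
      gives q = +-e_i; two give a point on a circle where the threshold
      equation reads s (x^2 - y^2) = 2, i.e. (x, y) = (+-a(s), +-b(s)), s > 2
      ([two_point_critical]). *)

From Stdlib Require Import Reals Lra.
From Coquelicot Require Import Coquelicot.
Open Scope R_scope.

Definition balanced (c0 c1 c2 c3 q0 q1 q2 q3 : R) : Prop :=
  q0*q1*(c0-c1) = 0 /\ q0*q2*(c0-c2) = 0 /\ q0*q3*(c0-c3) = 0 /\
  q1*q2*(c1-c2) = 0 /\ q1*q3*(c1-c3) = 0 /\ q2*q3*(c2-c3) = 0.

(* Forward: test with
   v = q_j e_i - q_i e_j.  Backward: multiply by |q|^2 = 1 and regroup. *)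
Lemma tangent_condition_iff_balanced c0 c1 c2 c3 q0 q1 q2 q3 :
  on_S3 q0 q1 q2 q3 ->
  (forall v0 v1 v2 v3, q0*v0 + q1*v1 + q2*v2 + q3*v3 = 0 ->
     q0*v0*c0 + q1*v1*c1 + q2*v2*c2 + q3*v3*c3 = 0)
  <-> balanced c0 c1 c2 c3 q0 q1 q2 q3.
Proof.
  unfold on_S3, balanced; intro hq; split.
  - intro Htan.
    repeat split.
    + rewrite <- (Htan q1 (-q0) 0 0); ring.
    + rewrite <- (Htan q2 0 (-q0) 0); ring.
    + rewrite <- (Htan q3 0 0 (-q0)); ring.
    + rewrite <- (Htan 0 q2 (-q1) 0); ring.
    + rewrite <- (Htan 0 q3 0 (-q1)); ring.
    + rewrite <- (Htan 0 0 q3 (-q2)); ring.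
  - intros (P01 & P02 & P03 & P12 & P13 & P23) v0 v1 v2 v3 Hv.
    transitivity ((q0^2+q1^2+q2^2+q3^2) * (q0*v0*c0 + q1*v1*c1 + q2*v2*c2 + q3*v3*c3)).
    { rewrite hq; ring. }
    transitivity ((q0^2*c0 + q1^2*c1 + q2^2*c2 + q3^2*c3) * (q0*v0 + q1*v1 + q2*v2 + q3*v3)
      + (q1*v0 - q0*v1) * (q0*q1*(c0-c1)) + (q2*v0 - q0*v2) * (q0*q2*(c0-c2))
      + (q3*v0 - q0*v3) * (q0*q3*(c0-c3)) + (q2*v1 - q1*v2) * (q1*q2*(c1-c2))
      + (q3*v1 - q1*v3) * (q1*q3*(c1-c3)) + (q3*v2 - q2*v3) * (q2*q3*(c2-c3))).
    { ring. }
    rewrite Hv, P01, P02, P03, P12, P13, P23; ring.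
Qed.

Section Model.
Variables l1 l2 l3 : R.

(* G expressed through the squared coordinates W = q0^2, X = q1^2, Y = q2^2,
   Z = q3^2 (the rotation P(q) is quadratic in q). *)
Definition Fsq (W X Y Z : R) : R :=
  (l1^2+l2^2+l3^2)*(W+X+Y+Z)^2/2 + 3
  - 2*(l1*(W+X-Y-Z) + l2*(W-X+Y-Z) + l3*(W-X-Y+Z))
  + /2*(l1^2*(W+X-Y-Z)^2 + l2^2*(W-X+Y-Z)^2 + l3^2*(W-X-Y+Z)^2)
  + 4*l1*l2*(X*Y-W*Z) + 4*l1*l3*(X*Z-W*Y) + 4*l2*l3*(Y*Z-W*X).

Lemma Gfun_Fsq q0 q1 q2 q3 :
  Gfun l1 l2 l3 q0 q1 q2 q3 = Fsq (q0^2) (q1^2) (q2^2) (q3^2).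
Proof.
  unfold Gfun, W10, fnorm2, mtrace, mmul, mtr, msym, msub, id3, diag3, Pq, Fsq, sum3.
  simpl; field.
Qed.

(* g_i is the partial derivative of Fsq in the i-th square, evaluated at q;
   hence dG/dq_i = 2 q_i g_i. *)
Definition g0 (q0 q1 q2 q3 : R) : R :=
  (l1^2+l2^2+l3^2)*(q0^2+q1^2+q2^2+q3^2) - 2*(l1+l2+l3)
  + l1^2*(q0^2+q1^2-q2^2-q3^2) + l2^2*(q0^2-q1^2+q2^2-q3^2) + l3^2*(q0^2-q1^2-q2^2+q3^2)
  - 4*l1*l2*q3^2 - 4*l1*l3*q2^2 - 4*l2*l3*q1^2.
Definition g1 (q0 q1 q2 q3 : R) : R :=
  (l1^2+l2^2+l3^2)*(q0^2+q1^2+q2^2+q3^2) - 2*(l1-l2-l3)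
  + l1^2*(q0^2+q1^2-q2^2-q3^2) - l2^2*(q0^2-q1^2+q2^2-q3^2) - l3^2*(q0^2-q1^2-q2^2+q3^2)
  + 4*l1*l2*q2^2 + 4*l1*l3*q3^2 - 4*l2*l3*q0^2.
Definition g2 (q0 q1 q2 q3 : R) : R :=
  (l1^2+l2^2+l3^2)*(q0^2+q1^2+q2^2+q3^2) - 2*(-l1+l2-l3)
  - l1^2*(q0^2+q1^2-q2^2-q3^2) + l2^2*(q0^2-q1^2+q2^2-q3^2) - l3^2*(q0^2-q1^2-q2^2+q3^2)
  + 4*l1*l2*q1^2 - 4*l1*l3*q0^2 + 4*l2*l3*q3^2.
Definition g3 (q0 q1 q2 q3 : R) : R :=
  (l1^2+l2^2+l3^2)*(q0^2+q1^2+q2^2+q3^2) - 2*(-l1-l2+l3)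
  - l1^2*(q0^2+q1^2-q2^2-q3^2) - l2^2*(q0^2-q1^2+q2^2-q3^2) + l3^2*(q0^2-q1^2-q2^2+q3^2)
  - 4*l1*l2*q0^2 + 4*l1*l3*q1^2 + 4*l2*l3*q2^2.

Lemma Gfun_directional_derivative q0 q1 q2 q3 v0 v1 v2 v3 :
  derivable_pt_lim
    (fun t => Gfun l1 l2 l3 (q0 + t*v0) (q1 + t*v1) (q2 + t*v2) (q3 + t*v3)) 0
    (2*(q0*v0*g0 q0 q1 q2 q3 + q1*v1*g1 q0 q1 q2 q3
        + q2*v2*g2 q0 q1 q2 q3 + q3*v3*g3 q0 q1 q2 q3)).
Proof.
  apply is_derive_Reals.
  apply (is_derive_ext
    (fun t => Fsq ((q0 + t*v0)^2) ((q1 + t*v1)^2) ((q2 + t*v2)^2) ((q3 + t*v3)^2))).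
  { intro t; symmetry; apply Gfun_Fsq. }
  unfold Fsq, g0, g1, g2, g3.
  auto_derive; [exact I | field].
Qed.

Definition trDP (q0 q1 q2 q3 : R) : R :=
  l1*(q0^2+q1^2-q2^2-q3^2) + l2*(q0^2-q1^2+q2^2-q3^2) + l3*(q0^2-q1^2-q2^2+q3^2).

Lemma g_differences q0 q1 q2 q3 : on_S3 q0 q1 q2 q3 ->
  let t := trDP q0 q1 q2 q3 in
  g0 q0 q1 q2 q3 - g1 q0 q1 q2 q3 = 2*(l2+l3)*(t - (2+l1)) /\
  g0 q0 q1 q2 q3 - g2 q0 q1 q2 q3 = 2*(l1+l3)*(t - (2+l2)) /\
  g0 q0 q1 q2 q3 - g3 q0 q1 q2 q3 = 2*(l1+l2)*(t - (2+l3)) /\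
  g1 q0 q1 q2 q3 - g2 q0 q1 q2 q3 = 2*(l1-l2)*(t - (2-l3)) /\
  g1 q0 q1 q2 q3 - g3 q0 q1 q2 q3 = 2*(l1-l3)*(t - (2-l2)) /\
  g2 q0 q1 q2 q3 - g3 q0 q1 q2 q3 = 2*(l2-l3)*(t - (2-l1)).
Proof.
  intros hq t; unfold on_S3 in hq; unfold t, g0, g1, g2, g3, trDP.
  replace (q0^2) with (1 - q1^2 - q2^2 - q3^2) by lra.
  repeat split; ring.
Qed.

Definition pair_conditions (q0 q1 q2 q3 : R) : Prop :=
  let t := trDP q0 q1 q2 q3 in
  (q0 = 0 \/ q1 = 0 \/ t = 2+l1) /\ (q0 = 0 \/ q2 = 0 \/ t = 2+l2) /\
  (q0 = 0 \/ q3 = 0 \/ t = 2+l3) /\ (q1 = 0 \/ q2 = 0 \/ t = 2-l3) /\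
  (q1 = 0 \/ q3 = 0 \/ t = 2-l2) /\ (q2 = 0 \/ q3 = 0 \/ t = 2-l1).
End Model.

Definition nondegenerate (l1 l2 l3 : R) : Prop :=
  l2+l3 <> 0 /\ l1+l3 <> 0 /\ l1+l2 <> 0 /\ l1-l2 <> 0 /\ l1-l3 <> 0 /\ l2-l3 <> 0.

Lemma ordered_nondegenerate l1 l2 l3 :
  l1 > l2 -> l2 > l3 -> l3 > 0 -> nondegenerate l1 l2 l3.
Proof. unfold nondegenerate; intros; repeat split; lra. Qed.

Lemma pair_factor_zero x y c a b : c <> 0 ->
  (x*y*(2*c*(a - b)) = 0 <-> x = 0 \/ y = 0 \/ a = b).
Proof.
  intro hc; split.
  - intro H.
    destruct (Rmult_integral _ _ H) as [Hxy | Hcab].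
    + destruct (Rmult_integral _ _ Hxy); auto.
    + destruct (Rmult_integral _ _ Hcab) as [H2c | Hab]; [|right; right; lra].
      destruct (Rmult_integral _ _ H2c); [lra | contradiction].
  - intros [-> | [-> | ->]]; ring.
Qed.

Lemma balanced_iff_pair_conditions l1 l2 l3 q0 q1 q2 q3 :
  nondegenerate l1 l2 l3 -> on_S3 q0 q1 q2 q3 ->
  balanced (g0 l1 l2 l3 q0 q1 q2 q3) (g1 l1 l2 l3 q0 q1 q2 q3)
           (g2 l1 l2 l3 q0 q1 q2 q3) (g3 l1 l2 l3 q0 q1 q2 q3) q0 q1 q2 q3
  <-> pair_conditions l1 l2 l3 q0 q1 q2 q3.
Proof.
  intros (n01 & n02 & n03 & n12 & n13 & n23) hq.
  destruct (g_differences l1 l2 l3 q0 q1 q2 q3 hq) as (D01 & D02 & D03 & D12 & D13 & D23).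
  unfold balanced, pair_conditions.
  rewrite D01, D02, D03, D12, D13, D23, !pair_factor_zero by assumption.
  reflexivity.
Qed.

Lemma critical_iff_tangent_condition l1 l2 l3 q0 q1 q2 q3 :
  critical_S3 l1 l2 l3 q0 q1 q2 q3 <->
  (forall v0 v1 v2 v3, q0*v0 + q1*v1 + q2*v2 + q3*v3 = 0 ->
     q0*v0*g0 l1 l2 l3 q0 q1 q2 q3 + q1*v1*g1 l1 l2 l3 q0 q1 q2 q3
     + q2*v2*g2 l1 l2 l3 q0 q1 q2 q3 + q3*v3*g3 l1 l2 l3 q0 q1 q2 q3 = 0).
Proof.
  unfold critical_S3; split; intros H v0 v1 v2 v3 Hv;
    pose proof (Gfun_directional_derivative l1 l2 l3 q0 q1 q2 q3 v0 v1 v2 v3) as Hd.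
  - pose proof (uniqueness_limite _ _ _ _ Hd (H v0 v1 v2 v3 Hv)); lra.
  - rewrite (H v0 v1 v2 v3 Hv), Rmult_0_r in Hd; exact Hd.
Qed.

Lemma critical_iff_pair_conditions l1 l2 l3 q0 q1 q2 q3 :
  nondegenerate l1 l2 l3 -> on_S3 q0 q1 q2 q3 ->
  critical_S3 l1 l2 l3 q0 q1 q2 q3 <-> pair_conditions l1 l2 l3 q0 q1 q2 q3.
Proof.
  intros hl hq.
  rewrite critical_iff_tangent_condition, tangent_condition_iff_balanced by exact hq.
  exact (balanced_iff_pair_conditions l1 l2 l3 q0 q1 q2 q3 hl hq).
Qed.

Lemma pm_sqrt_iff x y : 0 <= y -> (pm x (sqrt y) <-> x^2 = y).
Proof.
  intro hy; unfold pm; split.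
  - intros [-> | ->]; [| replace ((- sqrt y)^2) with (sqrt y ^ 2) by ring];
      apply pow2_sqrt; exact hy.
  - intros <-; destruct (Rle_or_lt 0 x) as [hx | hx].
    + left; rewrite sqrt_pow2; auto.
    + right; replace (x^2) with ((-x)^2) by ring; rewrite sqrt_pow2; lra.
Qed.

Lemma pm_one_iff x : pm x 1 <-> x^2 = 1.
Proof. rewrite <- sqrt_1 at 1; apply pm_sqrt_iff; lra. Qed.

Lemma half_pm_inv_nonneg s : s > 2 -> 0 <= /2 + /s /\ 0 <= /2 - /s.
Proof.
  intro hs.
  assert (0 < /s) by (apply Rinv_0_lt_compat; lra).
  assert (/s < /2) by (apply Rinv_lt_contravar; lra).
  lra.
Qed.

Lemma pm_a_s_sq s x : s > 2 -> pm x (a_s s) -> x^2 = /2 + /s.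
Proof. intro hs; apply pm_sqrt_iff, half_pm_inv_nonneg, hs. Qed.

Lemma pm_b_s_sq s x : s > 2 -> pm x (b_s s) -> x^2 = /2 - /s.
Proof. intro hs; apply pm_sqrt_iff, half_pm_inv_nonneg, hs. Qed.

(* A point (x, y) of the unit circle with y <> 0 satisfying the threshold
   equation c (x^2 + y^2) + s (x^2 - y^2) = 2 + c, s > 0, forces s > 2 and
   (x, y) = (+-a(s), +-b(s)): indeed s (1 - 2 y^2) = 2 with y^2 > 0. *)
Lemma two_point_critical s c x y : 0 < s -> x^2 + y^2 = 1 -> y <> 0 ->
  c*(x^2 + y^2) + s*(x^2 - y^2) = 2 + c ->
  s > 2 /\ pm x (a_s s) /\ pm y (b_s s).
Proof.
  intros hs hxy hy E.
  rewrite hxy in E.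
  assert (0 < y^2) by (pose proof (Rlt_0_sqr y hy); unfold Rsqr in *; lra).
  assert (hs2 : s > 2) by nra.
  destruct (half_pm_inv_nonneg s hs2).
  unfold a_s, b_s; split; [exact hs2 | split; apply pm_sqrt_iff; auto].
  - apply (Rmult_eq_reg_l (2*s)); [field_simplify; nra | nra].
  - apply (Rmult_eq_reg_l (2*s)); [field_simplify; nra | nra].
Qed.

Definition critical_points (l1 l2 l3 q0 q1 q2 q3 : R) : Prop :=
  (pm q0 1 /\ q1 = 0 /\ q2 = 0 /\ q3 = 0) \/
  (q0 = 0 /\ pm q1 1 /\ q2 = 0 /\ q3 = 0) \/
  (q0 = 0 /\ q1 = 0 /\ pm q2 1 /\ q3 = 0) \/
  (q0 = 0 /\ q1 = 0 /\ q2 = 0 /\ pm q3 1) \/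
  (l2 - l3 > 2 /\ q0 = 0 /\ q1 = 0
     /\ pm q2 (a_s (l2 - l3)) /\ pm q3 (b_s (l2 - l3))) \/
  (l1 - l3 > 2 /\ q0 = 0 /\ pm q1 (a_s (l1 - l3))
     /\ q2 = 0 /\ pm q3 (b_s (l1 - l3))) \/
  (l1 - l2 > 2 /\ q0 = 0 /\ pm q1 (a_s (l1 - l2))
     /\ pm q2 (b_s (l1 - l2)) /\ q3 = 0) \/
  (l1 + l2 > 2 /\ pm q0 (a_s (l1 + l2)) /\ q1 = 0
     /\ q2 = 0 /\ pm q3 (b_s (l1 + l2))) \/
  (l1 + l3 > 2 /\ pm q0 (a_s (l1 + l3)) /\ q1 = 0
     /\ pm q2 (b_s (l1 + l3)) /\ q3 = 0) \/
  (l2 + l3 > 2 /\ pm q0 (a_s (l2 + l3)) /\ pm q1 (b_s (l2 + l3))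
     /\ q2 = 0 /\ q3 = 0).

Ltac pm_to_squares :=
  repeat match goal with
  | H : pm _ 1 |- _ => apply pm_one_iff in H
  | hs : ?s > 2, H : pm _ (a_s ?s) |- _ => apply (pm_a_s_sq s _ hs) in H
  | hs : ?s > 2, H : pm _ (b_s ?s) |- _ => apply (pm_b_s_sq s _ hs) in H
  end.

Ltac rewrite_squares :=
  repeat match goal with H : _ ^ 2 = _ |- _ => rewrite H end.

Lemma critical_points_pair_conditions l1 l2 l3 q0 q1 q2 q3 :
  critical_points l1 l2 l3 q0 q1 q2 q3 -> pair_conditions l1 l2 l3 q0 q1 q2 q3.
Proof.
  unfold critical_points, pair_conditions.
  intros [c|[c|[c|[c|[c|[c|[c|[c|[c|c]]]]]]]]]; decompose [and] c; clear c; subst;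
    pm_to_squares; repeat split;
    first [ now left | now right; left
          | right; right; unfold trDP; rewrite_squares; field; lra ].
Qed.

Section Classification.
Variables l1 l2 l3 : R.
Hypotheses (h12 : l1 > l2) (h23 : l2 > l3) (h3 : l3 > 0).

(* Solutions of the pair conditions with q0 = 0.  Supports with three or more
   coordinates are excluded since they would force two distinct thresholds. *)
Lemma classify_q0_zero q1 q2 q3 :
  on_S3 0 q1 q2 q3 -> pair_conditions l1 l2 l3 0 q1 q2 q3 ->
  critical_points l1 l2 l3 0 q1 q2 q3.
Proof.
  unfold on_S3, critical_points; intros hq (_ & _ & _ & P12 & P13 & P23).
  destruct (Req_dec q1 0) as [-> | n1]; destruct (Req_dec q2 0) as [-> | n2];
    destruct (Req_dec q3 0) as [-> | n3];
    try (destruct P12 as [? | [? | E12]]; [contradiction.. |]);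
    try (destruct P13 as [? | [? | E13]]; [contradiction.. |]);
    try (destruct P23 as [? | [? | E23]]; [contradiction.. |]);
    try lra.
  - do 3 right; left; repeat split; apply pm_one_iff; lra.
  - do 2 right; left; repeat split; apply pm_one_iff; lra.
  - destruct (two_point_critical (l2-l3) (-l1) q2 q3) as (hs & ha & hb);
      [lra | lra | exact n3 | unfold trDP in E23; lra |].
    do 4 right; left; repeat split; auto.
  - right; left; repeat split; apply pm_one_iff; lra.
  - destruct (two_point_critical (l1-l3) (-l2) q1 q3) as (hs & ha & hb);
      [lra | lra | exact n3 | unfold trDP in E13; lra |].
    do 5 right; left; repeat split; auto.
  - destruct (two_point_critical (l1-l2) (-l3) q1 q2) as (hs & ha & hb);
      [lra | lra | exact n2 | unfold trDP in E12; lra |].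
    do 6 right; left; repeat split; auto.
Qed.

Lemma classify_q0_nonzero q0 q1 q2 q3 : q0 <> 0 ->
  on_S3 q0 q1 q2 q3 -> pair_conditions l1 l2 l3 q0 q1 q2 q3 ->
  critical_points l1 l2 l3 q0 q1 q2 q3.
Proof.
  unfold on_S3, critical_points; intros n0 hq (P01 & P02 & P03 & _).
  destruct (Req_dec q1 0) as [-> | n1]; destruct (Req_dec q2 0) as [-> | n2];
    destruct (Req_dec q3 0) as [-> | n3];
    try (destruct P01 as [? | [? | E01]]; [contradiction.. |]);
    try (destruct P02 as [? | [? | E02]]; [contradiction.. |]);
    try (destruct P03 as [? | [? | E03]]; [contradiction.. |]);
    try lra.
  - left; repeat split; apply pm_one_iff; lra.
  - destruct (two_point_critical (l1+l2) l3 q0 q3) as (hs & ha & hb);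
      [lra | lra | exact n3 | unfold trDP in E03; lra |].
    do 7 right; left; repeat split; auto.
  - destruct (two_point_critical (l1+l3) l2 q0 q2) as (hs & ha & hb);
      [lra | lra | exact n2 | unfold trDP in E02; lra |].
    do 8 right; left; repeat split; auto.
  - destruct (two_point_critical (l2+l3) l1 q0 q1) as (hs & ha & hb);
      [lra | lra | exact n1 | unfold trDP in E01; lra |].
    do 9 right; repeat split; auto.
Qed.

Lemma pair_conditions_iff_critical_points q0 q1 q2 q3 : on_S3 q0 q1 q2 q3 ->
  pair_conditions l1 l2 l3 q0 q1 q2 q3 <-> critical_points l1 l2 l3 q0 q1 q2 q3.
Proof.
  intro hq; split; [| apply critical_points_pair_conditions].
  destruct (Req_dec q0 0) as [-> | n0].
  - apply classify_q0_zero, hq.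
  - apply classify_q0_nonzero; assumption.
Qed.
End Classification.

Theorem mainTheorem7 (l1 l2 l3 : R) (h12 : l1 > l2) (h23 : l2 > l3) (h3 : l3 > 0)
  (q0 q1 q2 q3 : R) (hq : on_S3 q0 q1 q2 q3) :
  let G := Gfun l1 l2 l3 q0 q1 q2 q3 in
  let c1 := pm q0 1 /\ q1 = 0 /\ q2 = 0 /\ q3 = 0 in
  let c2 := q0 = 0 /\ pm q1 1 /\ q2 = 0 /\ q3 = 0 in
  let c3 := q0 = 0 /\ q1 = 0 /\ pm q2 1 /\ q3 = 0 in
  let c4 := q0 = 0 /\ q1 = 0 /\ q2 = 0 /\ pm q3 1 in
  let c5 := l2 - l3 > 2 /\ q0 = 0 /\ q1 = 0
            /\ pm q2 (a_s (l2 - l3)) /\ pm q3 (b_s (l2 - l3)) in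
  let c6 := l1 - l3 > 2 /\ q0 = 0 /\ pm q1 (a_s (l1 - l3))
            /\ q2 = 0 /\ pm q3 (b_s (l1 - l3)) in
  let c7 := l1 - l2 > 2 /\ q0 = 0 /\ pm q1 (a_s (l1 - l2))
            /\ pm q2 (b_s (l1 - l2)) /\ q3 = 0 in
  let c8 := l1 + l2 > 2 /\ pm q0 (a_s (l1 + l2)) /\ q1 = 0
            /\ q2 = 0 /\ pm q3 (b_s (l1 + l2)) in
  let c9 := l1 + l3 > 2 /\ pm q0 (a_s (l1 + l3)) /\ q1 = 0
            /\ pm q2 (b_s (l1 + l3)) /\ q3 = 0 in
  let c10 := l2 + l3 > 2 /\ pm q0 (a_s (l2 + l3)) /\ pm q1 (b_s (l2 + l3))
             /\ q2 = 0 /\ q3 = 0 in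
  (critical_S3 l1 l2 l3 q0 q1 q2 q3 <->
     c1 \/ c2 \/ c3 \/ c4 \/ c5 \/ c6 \/ c7 \/ c8 \/ c9 \/ c10)
  /\ (c1 -> G = (l1-1)^2 + (l2-1)^2 + (l3-1)^2)
  /\ (c2 -> G = (l1-1)^2 + (l2+1)^2 + (l3+1)^2)
  /\ (c3 -> G = (l1+1)^2 + (l2-1)^2 + (l3+1)^2)
  /\ (c4 -> G = (l1+1)^2 + (l2+1)^2 + (l3-1)^2)
  /\ (c5 -> G = (l1+1)^2 + /2 * (l2+l3)^2)
  /\ (c6 -> G = (l2+1)^2 + /2 * (l1+l3)^2)
  /\ (c7 -> G = (l3+1)^2 + /2 * (l1+l2)^2)
  /\ (c8 -> G = (l3-1)^2 + /2 * (l1-l2)^2)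
  /\ (c9 -> G = (l2-1)^2 + /2 * (l1-l3)^2)
  /\ (c10 -> G = (l1-1)^2 + /2 * (l2-l3)^2).
Proof.
  cbv zeta.
  split.
  { rewrite critical_iff_pair_conditions by auto using ordered_nondegenerate.
    exact (pair_conditions_iff_critical_points l1 l2 l3 h12 h23 h3 q0 q1 q2 q3 hq). }
  rewrite Gfun_Fsq.
  repeat split; intro c; decompose [and] c; clear c; subst; pm_to_squares;
    unfold Fsq; rewrite_squares; field; lra.
Qed.
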